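(* For every $m\ge1$, $I^{(k,r)}_m=\{f\in V: u_\lambda(f)=0 \text{ (at }(\ast))\text{ for all }\lambda\in S^{(k,r)}_m\}$.
   Context: Fix integers $n\ge2$, $1\le k\le n-1$, $r\ge2$, $g=\gcd(k+1,r-1)$, $\tau=e^{2\pi\sqrt{-1}/(r-1)}$; specialization $(\ast)$: $t=u^{(r-1)/g}$, $q=\tau u^{-(k+1)/g}$; $\mathbb K$ is the field of specialized scalars and $V=\mathbb K[x_1^{\pm1},\dots,x_n^{\pm1}]$. Multi-wheel set: $Z^{(k,r)}_m$ is the set of $z\in\mathbb K^n$ for which there exist pairwise distinct indices $i_{l,a}\in\{1,\dots,n\}$ ($1\le l\le m$, $1\le a\le k+1$) and $s_{l,a}\in\mathbb Z_{\ge0}$ ($1\le a\le k$) with $z_{i_{l,a+1}}=z_{i_{l,a}}tq^{s_{l,a}}$, $\sum_{a=1}^ks_{l,a}\le r-2$ for each $l$, and $i_{l,a}<i_{l,a+1}$ whenever $s_{l,a}=0$. $I^{(k,r)}_m=\{f\in V:f(z)=0\ \forall z\in Z^{(k,r)}_m\}$. $P=\mathbb Z^n$; $\rho(\lambda)$ is the unique permutation of $(\frac{n-1}2,\dots,-\frac{n-1}2)$ with $\rho(\lambda)_i>\rho(\lambda)_j$ iff $\lambda_i>\lambda_j$ or ($\lambda_i=\lambda_j$, $i<j$); $(i_1,\dots,i_n)$ are the indices with $\rho(\lambda)_{i_a}=\frac{n+1}2-a$. $u_\lambda(f)=f(t^{-\rho(\lambda)_1}q^{-\lambda_1},\dots,t^{-\rho(\lambda)_n}q^{-\lambda_n})$.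 $(i,j)$ is a neighborhood of type $(a,b)$ in $\lambda$ if $\rho(\lambda)_i-\rho(\lambda)_j=a-1$ and either $\lambda_i-\lambda_j\le b-1$, or $\lambda_i-\lambda_j=b$ and $j<i$. A neighborhood of type $(k+1,r-1)$ has the form $(i_l,i_{l+k})$; two such, $(i_l,i_{l+k})$ and $(i_{l'},i_{l'+k})$, are distinct if $\{i_l,\dots,i_{l+k}\}\cap\{i_{l'},\dots,i_{l'+k}\}=\emptyset$. $S^{(k,r)}_m$ is the set of $\lambda\in P$ having $m$ pairwise distinct neighborhoods of type $(k+1,r-1)$. *)

From HB Require Import structures.
From mathcomp Require Import all_boot all_order all_algebra all_field.
From mathcomp Require Import finmap.
From mathcomp Require Import monalg fraction.

Unset Strict Implicit.
Unset Printing Implicit Defensive.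

Import Order.TTheory GRing.Theory Num.Theory.
Local Open Scope ring_scope.

(* K = algC(w), rational functions in an indeterminate w over the      *)
(* algebraic complex numbers; the specialization parameter is u = w^2  *)
(* (w is a square root of u, needed for the half-integer powers        *)
(* t^{-rho(lambda)_i} when n is even).                                  *)
Definition Kf : fieldType := {fraction {poly algC}}.
Definition toK (p : {poly algC}) : Kf := @FracField.tofrac _ p.

Definition wK : Kf := toK 'X.
Definition uK : Kf := wK ^+ 2.

Definition gg (k r : nat) : nat := gcdn k.+1 r.-1.

Definition thalf (k r : nat) : Kf := wK ^+ (r.-1 %/ gg k r).
Definition tK (k r : nat) : Kf := uK ^+ (r.-1 %/ gg k r).
Definition qK (k r : nat) (tau : algC) : Kf :=
  toK tau%:P * uK ^- (k.+1 %/ gg k r).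

(* Laurent polynomials V = K[x_1^{+-1},...,x_n^{+-1}]: finitely        *)
(* supported functions from exponent vectors Z^n to K.                 *)
Definition expo (n : nat) := {ffun 'I_n -> int}.
Definition LPoly (n : nat) := {malg Kf[expo n]}.

Definition leval (n : nat) (f : LPoly n) (z : 'I_n -> Kf) : Kf :=
  \sum_(e <- msupp f) f@_e * \prod_(i < n) z i ^ (e i).

(* Multi-wheel set Z^{(k,r)}_m (0-based indices: l < m, a <= k;        *)
(* points with all coordinates nonzero, where Laurent polynomials are  *)
(* defined).                                                           *)
Definition in_wheel (n k r m : nat) (tau : algC) (z : 'I_n -> Kf) : Prop :=
  (forall i, z i != 0) /\
  exists (ix : nat -> nat -> 'I_n) (s : nat -> nat -> nat),
    (forall l a l' a', (l < m)%N -> (a <= k)%N -> (l' < m)%N -> (a' <= k)%N ->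
        ix l a = ix l' a' -> l = l' /\ a = a') /\
    (forall l, (l < m)%N ->
       (forall a, (a < k)%N ->
          z (ix l a.+1) = z (ix l a) * tK k r * qK k r tau ^+ s l a /\
          (s l a = 0%N -> (ix l a < ix l a.+1)%N)) /\
       (\sum_(a < k) s l a <= r - 2)%N).

Definition in_I (n k r m : nat) (tau : algC) (f : LPoly n) : Prop :=
  forall z, in_wheel n k r m tau z -> leval n f z = 0.

(* rkpos n lam i = a-1 where rho(lam)_i = (n+1)/2 - a, i.e. the number   *)
(* of j with lam_j > lam_i or (lam_j = lam_i and j < i).               *)
(* Thus rho(lam)_i = (n-1)/2 - rkpos n lam i.                            *)
Definition rkpos (n : nat) (lam : 'I_n -> int) (i : 'I_n) : nat :=
  #|[set j : 'I_n | (lam i < lam j) || ((lam j == lam i) && (j < i)%N)]|.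

(* twice rho(lambda)_i, an integer *)
Definition rho2 (n : nat) (lam : 'I_n -> int) (i : 'I_n) : int :=
  n.-1%:Z - (2 * rkpos n lam i)%:Z.

Definition upoint (n k r : nat) (tau : algC) (lam : 'I_n -> int) : 'I_n -> Kf :=
  fun i => thalf k r ^ (- rho2 n lam i) * qK k r tau ^ (- lam i).

Definition u_lam (n k r : nat) (tau : algC) (lam : 'I_n -> int) (f : LPoly n) : Kf :=
  leval n f (upoint n k r tau lam).

Definition neighborhood (n : nat) (lam : 'I_n -> int) (a b : nat) (i j : 'I_n) : bool :=
  (rho2 n lam i - rho2 n lam j == 2%:Z * (a%:Z - 1)) &&
  ((lam i - lam j <= b%:Z - 1) || ((lam i - lam j == b%:Z) && (j < i)%N)).

Definition nbset (n : nat) (lam : 'I_n -> int) (i j : 'I_n) : {set 'I_n} :=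
  [set x : 'I_n | (rkpos n lam i <= rkpos n lam x <= rkpos n lam j)%N].

Definition in_S (n k r m : nat) (lam : 'I_n -> int) : Prop :=
  exists nb : nat -> 'I_n * 'I_n,
    (forall l, (l < m)%N -> neighborhood n lam k.+1 r.-1 (nb l).1 (nb l).2) /\
    (forall l l', (l < m)%N -> (l' < m)%N -> l <> l' ->
        [disjoint nbset n lam (nb l).1 (nb l).2 & nbset n lam (nb l').1 (nb l').2]).

From HB Require Import structures.
From mathcomp Require Import all_boot all_order all_algebra all_field.
From mathcomp Require Import finmap.
From mathcomp Require Import monalg fraction.
From mathcomp Require Import zify ring.
Set Implicit Arguments.
Unset Strict Implicit.
Import Order.TTheory GRing.Theory Num.Theory.
Local Open Scope ring_scope.

(* For [lam] in [S], a neighborhood [(i, j)] of type [(k+1, r-1)] is a run of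
   [k+1] consecutive ranks along which the coordinates of the point of [lam]
   grow by steps [t q^s].  Since [t^(k+1) q^(r-1) = 1], the run closes up into
   a cycle by a step from [j] back to [i], of total [q]-length [r-1]; cutting the
   cycle at a step of positive length leaves a wheel.  So the point of [lam]
   lies on the multi-wheel set.
   Conversely, a point of the multi-wheel set is determined by its coordinates
   at the heads of its wheels.  When these lie on a large grid, the point is the
   point of a weight in [S] whose wheels occupy consecutive ranks, so [f]
   vanishes there; as a function of each head coordinate [f] is a Laurent
   polynomial of bounded degree, so it vanishes at all such points. *)

Lemma wK_neq0 : wK != 0.
Proof. by rewrite /wK /toK tofrac_eq0 polyX_eq0. Qed.

Lemma thalf_neq0 k r : thalf k r != 0.
Proof. by rewrite expf_neq0 // wK_neq0. Qed.

Lemma tK_thalf k r : tK k r = thalf k r ^+ 2.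
Proof. by rewrite /tK /thalf /uK -!exprM mulnC. Qed.

Lemma qK_neq0 k r tau : tau != 0 -> qK k r tau != 0.
Proof.
move=> tau_neq0; rewrite mulf_neq0 ?tofrac_eq0 ?polyC_eq0 //.
by rewrite invr_eq0 !expf_neq0 // wK_neq0.
Qed.

Lemma toK_polyC_exp (a : algC) d : toK a%:P ^+ d = toK (a ^+ d)%:P.
Proof. by rewrite /toK -rmorphXn /= polyC_exp. Qed.

Lemma tK_qK_cycle k r tau : (r.-1).-primitive_root tau ->
  tK k r ^+ k.+1 * qK k r tau ^+ r.-1 = 1.
Proof.
move=> prim_tau; rewrite /tK /qK [(_ * _) ^+ r.-1]exprMn toK_polyC_exp (prim_expr_order prim_tau).
rewrite /toK rmorph1 mul1r -!exprM exprVn -exprM.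
have -> : (r.-1 %/ gg k r * k.+1 = k.+1 %/ gg k r * r.-1)%N.
  by rewrite mulnC muln_divA ?dvdn_gcdr // [RHS]mulnC muln_divA ?dvdn_gcdl // mulnC.
by rewrite mulnA mulfV // !expf_neq0 // wK_neq0.
Qed.

Lemma qK_expf_eq1 k r tau d : tau != 0 -> qK k r tau ^+ d = 1 -> d = 0%N.
Proof.
move=> tau_neq0; rewrite /qK exprMn toK_polyC_exp exprVn /uK -!exprM.
set N := (2 * _ * d)%N; have wN_neq0 : wK ^+ N != 0 by rewrite expf_neq0 // wK_neq0.
move/(canRL (mulfK (invr_neq0 wN_neq0))); rewrite mul1r invrK /wK /toK -rmorphXn /=.
move/eqP; rewrite tofrac_eq => /eqP/(congr1 (fun p : {poly algC} => size p)).
rewrite size_polyXn size_polyC expf_neq0 //= => -[].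
have : (0 < k.+1 %/ gg k r)%N by rewrite divn_gt0 ?gcdn_gt0 // dvdn_leq // dvdn_gcdl.
by rewrite /N; clear N wN_neq0; case: d => // d; lia.
Qed.

Lemma qK_expz_inj k r tau (a b : int) : tau != 0 -> qK k r tau ^ a = qK k r tau ^ b -> a = b.
Proof.
move=> tau_neq0 qab; have q_neq0 := qK_neq0 k r tau_neq0.
have : qK k r tau ^ (a - b) = 1 by rewrite expfzDr // qab -expfzDr // subrr expr0z.
case: (a - b) (subrK b a) => [d|d] <-.
  by move/(qK_expf_eq1 tau_neq0) ->; rewrite add0r.
by rewrite NegzE -invr_expz => /(canRL (@invrK _)); rewrite invr1 => /(qK_expf_eq1 tau_neq0).
Qed.

Section Rank.
Variables (T : finType) (disp : Order.disp_t) (X : orderType disp) (kp : T -> X).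
Hypothesis kp_inj : injective kp.
Local Open Scope order_scope.

Definition nabove (i : T) : nat := #|[set j | kp i < kp j]|.

Lemma nabove_lt i j : kp i < kp j -> (nabove j < nabove i)%N.
Proof.
move=> lt_ij; apply: proper_card; apply/properP; split.
  by apply/subsetP => x; rewrite !inE => /(lt_trans lt_ij).
by exists j; rewrite !inE ?lt_ij ?ltxx.
Qed.

Lemma ltn_nabove i j : (nabove i < nabove j)%N = (kp j < kp i).
Proof.
apply/idP/idP => [lt_ij|/nabove_lt //].
case: (ltgtP (kp i) (kp j)) => // [/nabove_lt|/kp_inj eq_ij]; first by lia.
by rewrite eq_ij ltnn in lt_ij.
Qed.

Lemma nabove_inj : injective nabove.
Proof.
move=> i j eq_ij; apply: kp_inj; apply/eqP; rewrite eq_le !leNgt -!ltn_nabove.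
by rewrite eq_ij ltnn.
Qed.

Lemma nabove_lt_card i : (nabove i < #|T|)%N.
Proof.
rewrite -cardsT; apply: proper_card; apply/properP; split; first exact: subsetT.
by exists i; rewrite ?inE ?ltxx.
Qed.

Lemma nabove_onto p : (p < #|T|)%N -> exists i, nabove i = p.
Proof.
move=> lt_p; pose f i : 'I_#|T| := Ordinal (nabove_lt_card i).
have f_inj : injective f by move=> i j /(congr1 val) /nabove_inj.
have /codomP [i /(congr1 val) /= ->] := inj_card_onto f_inj (eq_leq (card_ord _)) (Ordinal lt_p).
by exists i.
Qed.

Lemma nabove_succ i i' : kp i < kp i' ->
  (forall j, kp i < kp j -> kp j < kp i' -> False) -> nabove i = (nabove i').+1.
Proof.
move=> lt_ii' no_between; rewrite /nabove.
have -> : [set j | kp i < kp j] = i' |: [set j | kp i' < kp j].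
  apply/setP => j; rewrite !inE; apply/idP/idP => [lt_ij|].
    case: (ltgtP (kp j) (kp i')) => [/(no_between _ lt_ij) []||/kp_inj ->].
    - by rewrite orbT.
    - by rewrite eqxx.
  by case/orP => [/eqP -> //|]; apply: lt_trans.
by rewrite cardsU1 inE ltxx.
Qed.

End Rank.

Definition laurent_bounded (K : fieldType) (D : nat) (phi : K -> K) : Prop :=
  exists s : seq (K * int), all (fun p => `|p.2| <= D)%N s /\
    forall v, v != 0 -> phi v = \sum_(p <- s) p.1 * v ^ p.2.

(* Multiplying by [v ^+ D] turns [phi] into a polynomial of degree at most [2 D]. *)
Lemma laurent_bounded_eq0 (K : fieldType) D (phi : K -> K) (V : seq K) :
  laurent_bounded D phi -> uniq V -> (2 * D < size V)%N ->
  (forall v, v \in V -> v != 0 /\ phi v = 0) -> forall v, v != 0 -> phi v = 0.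
Proof.
move=> [s [/allP s_le phiE]] uniq_V size_V phi_V.
pose p : {poly K} := \sum_(e <- s) e.1 *: 'X^`|e.2 + D%:Z|.
have pE v : v != 0 -> p.[v] = v ^+ D * phi v.
  move=> v_neq0; rewrite phiE // horner_sum mulr_sumr.
  apply: eq_big_seq => -[a d] /s_le /= le_d.
  have abs_dD : (absz (d + D%:Z))%:Z = d + D%:Z by lia.
  rewrite hornerZ hornerXn.
  have -> : v ^+ `|d + D%:Z| = v ^ (d + D%:Z) by rewrite -abs_dD.
  by rewrite expfzDr // [RHS]mulrCA; congr (_ * _); apply: mulrC.
have size_p : (size p <= (2 * D).+1)%N.
  apply: leq_trans (size_sum _ _ _) _; apply/bigmax_leqP_seq => e /s_le le_e _.
  by apply: leq_trans (size_scale_leq _ _) _; rewrite size_polyXn; lia.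
have p_eq0 : p = 0.
  apply/eqP; apply: contraLR size_V => p_neq0; rewrite -leqNgt -ltnS.
  apply: leq_trans (max_poly_roots p_neq0 _ uniq_V) size_p.
  by apply/allP => v /phi_V [v_neq0 phi_v]; rewrite /root pE // phi_v mulr0.
move=> v v_neq0; have /eqP := pE v v_neq0; rewrite p_eq0 horner0 eq_sym mulf_eq0.
by rewrite expf_eq0 (negbTE v_neq0) andbF => /eqP.
Qed.

Notation fupdate y h v := [ffun j => if j == h then v else y j].

Lemma laurent_grid_eq0 (K : fieldType) n D B (F : {ffun 'I_n -> K} -> K)
    (grid : 'I_n -> nat -> K) :
  (2 * D < B)%N -> (forall h u, grid h u != 0) -> (forall h, injective (grid h)) ->
  (forall (y : {ffun 'I_n -> K}) h, laurent_bounded D (fun v => F (fupdate y h v))) ->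
  (forall x : 'I_n -> nat, (forall h, x h < B)%N -> F [ffun h => grid h (x h)] = 0) ->
  forall y : {ffun 'I_n -> K}, (forall h, y h != 0) -> F y = 0.
Proof.
move=> size_B grid_neq0 grid_inj F_laurent F_grid.
have F_on_grid x (y : {ffun 'I_n -> K}) :
    (forall h, x h < B)%N -> (forall h, y h = grid h (x h)) -> F y = 0.
  by move=> x_lt y_grid; rewrite -(F_grid x x_lt); congr F; apply/ffunP => h; rewrite ffunE.
suff free_T N (T : {set 'I_n}) x (y : {ffun 'I_n -> K}) :
    (#|T| <= N)%N -> (forall h, x h < B)%N -> (forall h, y h != 0) ->
    (forall h, h \notin T -> y h = grid h (x h)) -> F y = 0.
  move=> y y_neq0; apply: (free_T _ setT (fun=> 0%N)) => // [_|h]; first lia.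
  by rewrite in_setT.
elim: N T x y => [|N IHN] T x y le_T x_lt y_neq0 y_grid.
  move: le_T; rewrite leqn0 cards_eq0 => /eqP T0.
  by apply: (F_on_grid x) => // h; apply: y_grid; rewrite T0 inE.
have [T0|[h h_T]] := set_0Vmem T.
  by apply: (F_on_grid x) => // h; apply: y_grid; rewrite T0 inE.
have le_T' : (#|T :\ h| <= N)%N by move: le_T; rewrite (cardsD1 h T) h_T.
have F_line v : v \in [seq grid h u | u <- iota 0 B] -> v != 0 /\ F (fupdate y h v) = 0.
  move=> /mapP [u]; rewrite mem_iota add0n => /andP[_ lt_u] ->; split=> //.
  apply: (IHN (T :\ h) (fun j => if j == h then u else x j)) => // [j|j|j].
  - by case: eqP.
  - by rewrite ffunE; case: (j == h); [apply: grid_neq0|apply: y_neq0].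
  - by rewrite !inE negb_and negbK ffunE; case: eqP => [->|_ /= /y_grid].
have -> : y = fupdate y h (y h) by apply/ffunP => j; rewrite ffunE; case: eqP => [->|].
apply: (laurent_bounded_eq0 (F_laurent y h) _ _ F_line) => //.
  by rewrite map_inj_uniq ?iota_uniq.
by rewrite size_map size_iota.
Qed.

Lemma eq_leval n (f : LPoly n) (z z' : 'I_n -> Kf) : z =1 z' -> leval n f z = leval n f z'.
Proof.
by move=> eq_z; apply: eq_bigr => e _; congr (_ * _); apply: eq_bigr => i _; rewrite eq_z.
Qed.

Lemma leq_absz_sum (I : finType) (P : pred I) (g : I -> int) :
  (absz (\sum_(i | P i) g i)%R <= \sum_(i | P i) absz (g i))%N.
Proof. by elim/big_rec2: _ => // i m x _; lia. Qed.

Lemma leval_laurent n (f : LPoly n) D (b : pred 'I_n) (c w : 'I_n -> Kf) :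
  (forall e, e \in msupp f -> (\sum_i absz (e i) <= D)%N) ->
  laurent_bounded D (fun v => leval n f (fun j => if b j then v * c j else w j)).
Proof.
move=> deg_f; exists [seq (f@_e * \prod_i (if b i then c i ^ e i else w i ^ e i),
                            \sum_(i | b i) e i) | e <- msupp f]; split.
  apply/allP => _ /mapP [e /deg_f le_e ->] /=; apply: leq_trans (leq_absz_sum _ _) _.
  by apply: leq_trans le_e; rewrite [X in (_ <= X)%N](bigID b) leq_addr.
move=> v v_neq0; rewrite big_map; apply: eq_bigr => e _ /=; rewrite -mulrA; congr (_ * _).
rewrite (big_morph (fun d : int => v ^ d) (fun d d' => expfzDr d d' v_neq0) (expr0z v)).
rewrite [LHS](eq_bigr (fun i => (if b i then v ^ e i else 1) *
                           (if b i then c i ^ e i else w i ^ e i))) => [|i _].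
  by rewrite big_split /= -big_mkcond mulrC.
by case: (b i); rewrite ?expfzMl ?mul1r.
Qed.

(* [rkpos] ranks by [lam] in decreasing order, ties broken by index; a single
   integer key encodes this order because indices are smaller than [n]. *)
Definition rank_key n (lam : 'I_n -> int) (j : 'I_n) : int := n%:Z * lam j - (j : nat)%:Z.

Lemma lt_rank_key n (lam : 'I_n -> int) (i j : 'I_n) :
  (rank_key lam i < rank_key lam j) = (lam i < lam j) || ((lam j == lam i) && (j < i)%N).
Proof.
rewrite /rank_key; have := ltn_ord i; have := ltn_ord j.
case: (ltrgtP (lam i) (lam j)) => lam_ij /= *.
- by apply/idP; nia.
- by apply/negbTE; rewrite -leNgt; nia.
- by rewrite lam_ij; apply/idP/idP; lia.
Qed.

Lemma rank_key_inj n (lam : 'I_n -> int) : injective (rank_key lam).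
Proof.
move=> i j; rewrite /rank_key => eq_key; have := ltn_ord i; have := ltn_ord j.
case: (ltrgtP (lam i) (lam j)) => lam_ij lt_j lt_i; try (exfalso; nia).
by apply: val_inj; move: eq_key; rewrite lam_ij => /addrI/oppr_inj/eqP; rewrite eqz_nat => /eqP.
Qed.

Lemma rkposE n (lam : 'I_n -> int) : rkpos n lam =1 nabove (rank_key lam).
Proof. by move=> i; apply: eq_card => j; rewrite !inE lt_rank_key. Qed.

Lemma ltn_rkpos n (lam : 'I_n -> int) i j :
  (rkpos n lam i < rkpos n lam j)%N = (rank_key lam j < rank_key lam i).
Proof. by rewrite !rkposE (ltn_nabove (@rank_key_inj n lam)). Qed.

Lemma rkpos_inj n (lam : 'I_n -> int) : injective (rkpos n lam).
Proof. by move=> i j; rewrite !rkposE => /(nabove_inj (@rank_key_inj n lam)). Qed.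

Lemma rkpos_lt n (lam : 'I_n -> int) i : (rkpos n lam i < n)%N.
Proof. by rewrite rkposE -[X in (_ < X)%N]card_ord nabove_lt_card. Qed.

Lemma upoint_neq0 n k r tau (lam : 'I_n -> int) i : tau != 0 -> upoint n k r tau lam i != 0.
Proof. by move=> tau_neq0; rewrite mulf_neq0 // expfz_neq0 ?thalf_neq0 ?qK_neq0. Qed.

Lemma upoint_shift n k r tau (lam : 'I_n -> int) i j (a d : nat) : tau != 0 ->
  rkpos n lam j = (rkpos n lam i + a)%N -> lam j = lam i - d%:Z ->
  upoint n k r tau lam j = upoint n k r tau lam i * tK k r ^+ a * qK k r tau ^+ d.
Proof.
move=> tau_neq0 rk_j lam_j; rewrite /upoint /rho2 rk_j lam_j.
have -> : - ((n.-1)%:Z - (2 * (rkpos n lam i + a))%:Z) =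
          - ((n.-1)%:Z - (2 * rkpos n lam i)%:Z) + (2 * a)%N%:Z by lia.
have -> : - (lam i - d%:Z) = - lam i + d%:Z by lia.
rewrite expfzDr ?thalf_neq0 // expfzDr ?qK_neq0 // tK_thalf -exprM.
by rewrite -!mulrA; congr (_ * _); rewrite mulrCA.
Qed.

Definition wheel_chain n k r tau (z : 'I_n -> Kf) (c : nat -> 'I_n) (s : nat -> nat) : Prop :=
  (forall a, (a < k)%N ->
     z (c a.+1) = z (c a) * tK k r * qK k r tau ^+ s a /\ (s a = 0%N -> (c a < c a.+1)%N)) /\
  (\sum_(a < k) s a <= r - 2)%N.

Definition wheel_cycle n k r tau (z : 'I_n -> Kf) (c : 'I_k.+1 -> 'I_n) (g : 'I_k.+1 -> nat) :=
  forall a, z (c (a + Zp1)) = z (c a) * tK k r * qK k r tau ^+ g a /\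
            (g a = 0%N -> (c a < c (a + Zp1)%R)%N).

Lemma inZpS p a : inZp a.+1 = inZp a + Zp1 :> 'I_p.+1.
Proof. by apply: val_inj; rewrite /= modnDm addn1. Qed.

Lemma inZp_ord p (a : 'I_p.+1) : inZp a = a.
Proof. by apply: val_inj; rewrite /= modn_small. Qed.

Lemma inZp_inj_le p a b : (a <= p)%N -> (b <= p)%N -> inZp a = inZp b :> 'I_p.+1 -> a = b.
Proof. by move=> le_a le_b /(congr1 val) /=; rewrite !modn_small. Qed.

Lemma wheel_cycle_cut n k r tau (z : 'I_n -> Kf) c g (a0 : 'I_k.+1) :
  wheel_cycle r tau z c g -> (\sum_a g a = r.-1)%N -> (0 < g a0)%N ->
  wheel_chain k r tau z (fun a => c (a0 + Zp1 + inZp a)) (fun a => g (a0 + Zp1 + inZp a)).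
Proof.
move=> cyc sum_g g_a0; split=> [a _|]; first by rewrite inZpS addrA; exact: cyc.
have rot : (\sum_(a < k.+1) g (a0 + Zp1 + inZp a)%R = r.-1)%N.
  rewrite -sum_g [RHS](reindex_inj (addrI (a0 + Zp1))).
  by apply: eq_bigr => a _; rewrite inZp_ord.
have rot_last : a0 + Zp1 + inZp k = a0.
  have inZp_kS : inZp k.+1 = 0 :> 'I_k.+1 by apply: val_inj; rewrite /= modnn.
  by rewrite -addrA [Zp1 + _]addrC -inZpS inZp_kS addr0.
by move: rot; rewrite big_ord_recr /= rot_last; lia.
Qed.

Section PointsOfS.
Variables (n k r : nat) (tau : algC) (lam : 'I_n -> int).
Hypotheses (r_gt1 : (1 < r)%N) (prim_tau : (r.-1).-primitive_root tau).

Let tau_neq0 : tau != 0.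
Proof. by rewrite (prim_root_eq0 prim_tau) -lt0n; lia. Qed.

Local Notation rk := (rkpos n lam).
Local Notation z := (upoint n k r tau lam).

Definition rank_index (i0 : 'I_n) (p : nat) : 'I_n := odflt i0 [pick i | rk i == p].

Lemma rkpos_rank_index i0 p : (p < n)%N -> rk (rank_index i0 p) = p.
Proof.
move=> lt_pn; rewrite /rank_index; case: pickP => [i /eqP //|none].
have [|i rk_i] := nabove_onto (@rank_key_inj n lam) (_ : p < #|'I_n|)%N.
  by rewrite card_ord.
by have := none i; rewrite rkposE rk_i eqxx.
Qed.

Lemma rank_index_rkpos i0 i : rank_index i0 (rk i) = i.
Proof. by apply: (@rkpos_inj n lam); rewrite rkpos_rank_index ?rkpos_lt. Qed.

Definition rank_gap i0 p : nat := `|lam (rank_index i0 p) - lam (rank_index i0 p.+1)|.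

Lemma rank_index_succ i0 p : (p.+1 < n)%N ->
  lam (rank_index i0 p.+1) = lam (rank_index i0 p) - (rank_gap i0 p)%:Z /\
  (rank_gap i0 p = 0%N -> (rank_index i0 p < rank_index i0 p.+1)%N).
Proof.
move=> lt_pn; have : (rk (rank_index i0 p) < rk (rank_index i0 p.+1))%N.
  by rewrite !rkpos_rank_index // ltnW.
rewrite ltn_rkpos lt_rank_key /rank_gap => /orP[lt_lam|/andP[/eqP eq_lam lt_idx]].
  split; first lia.
  by move/eqP; rewrite absz_eq0 subr_eq0 => /eqP eq_lam; rewrite eq_lam ltxx in lt_lam.
by rewrite eq_lam subrr subr0.
Qed.

Lemma lam_rank_index_add i0 b c : (b + c < n)%N ->
  lam (rank_index i0 (b + c)) =
  lam (rank_index i0 b) - (\sum_(a < c) rank_gap i0 (b + a))%N%:Z.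
Proof.
elim: c => [|c IHc] lt_bc; first by rewrite addn0 big_ord0 subr0.
rewrite addnS in lt_bc *; have [-> _] := rank_index_succ i0 lt_bc.
by rewrite IHc 1?ltnW // big_ord_recr PoszD opprD addrA.
Qed.

Lemma rkpos_neighborhood i j a b : neighborhood n lam a.+1 b i j -> rk j = (rk i + a)%N.
Proof. by case/andP => /eqP; rewrite /rho2; lia. Qed.

Lemma neighborhood_drop i j : neighborhood n lam k.+1 r.-1 i j ->
  let D := (\sum_(a < k) rank_gap i (rk i + a))%N in
  lam j = lam i - D%:Z /\ ((D <= r - 2)%N \/ D = r.-1 /\ (j < i)%N).
Proof.
move=> nbh_ij D; have rk_j := rkpos_neighborhood nbh_ij.
have lt_n : (rk i + k < n)%N by rewrite -rk_j rkpos_lt.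
have lam_j : lam j = lam i - D%:Z.
  rewrite -[j](rank_index_rkpos i) -[in RHS](rank_index_rkpos i i) rk_j.
  exact: lam_rank_index_add.
split=> //; case/andP: nbh_ij => _; rewrite lam_j opprB addrCA subrr addr0.
by case/orP => [le_D|/andP[/eqP eq_D lt_ji]]; [left|right]; lia.
Qed.

Definition nb_index (i : 'I_n) (a : 'I_k.+1) : 'I_n := rank_index i (rk i + a).

Definition nb_gap (i j : 'I_n) (a : 'I_k.+1) : nat :=
  if a == ord_max then (r.-1 - `|lam i - lam j|)%N else rank_gap i (rk i + a).

Lemma rkpos_nb_index i j a : neighborhood n lam k.+1 r.-1 i j ->
  rk (nb_index i a) = (rk i + a)%N.
Proof.
move=> /rkpos_neighborhood rk_j; apply: rkpos_rank_index.
by have := rkpos_lt lam j; have := ltn_ord a; lia.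
Qed.

Lemma nb_index_inj i j : neighborhood n lam k.+1 r.-1 i j -> injective (nb_index i).
Proof.
move=> nbh_ij a b /(congr1 rk); rewrite !(rkpos_nb_index _ nbh_ij) => /addnI.
exact: val_inj.
Qed.

Lemma nb_index_nbset i j a : neighborhood n lam k.+1 r.-1 i j ->
  nb_index i a \in nbset n lam i j.
Proof.
move=> nbh_ij; rewrite inE (rkpos_nb_index _ nbh_ij) (rkpos_neighborhood nbh_ij).
by have := ltn_ord a; lia.
Qed.

(* The closing step from [j] to [i] has [q]-length [r-1-D] because
   [t^(k+1) q^(r-1) = 1]; it is [0] only if [D = r-1], and then [j < i]. *)
Lemma neighborhood_cycle i j : neighborhood n lam k.+1 r.-1 i j ->
  wheel_cycle r tau z (nb_index i) (nb_gap i j) /\ (\sum_a nb_gap i j a = r.-1)%N.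
Proof.
move=> nbh_ij; have [lam_j drop_D] := neighborhood_drop nbh_ij.
set D := (\sum_(a < k) _)%N in lam_j drop_D.
have absD : `|lam i - lam j|%N = D by rewrite lam_j opprB addrCA subrr addr0.
have le_D : (D <= r.-1)%N by case: drop_D => [|[->]]; lia.
have rk_j := rkpos_neighborhood nbh_ij.
have lt_n : (rk i + k < n)%N by rewrite -rk_j rkpos_lt.
have nb_i : nb_index i 0 = i by rewrite /nb_index addn0 rank_index_rkpos.
have nb_j : nb_index i ord_max = j by rewrite /nb_index /= -rk_j rank_index_rkpos.
split; last first.
  rewrite big_ord_recr /= /nb_gap eqxx absD.
  under eq_bigr => a _ do rewrite -val_eqE /= (ltn_eqF (ltn_ord a)).
  by rewrite subnKC.
move=> a; rewrite /nb_gap; case: eqP => [->|/eqP a_neq_max].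
  have -> : ord_max + Zp1 = 0 :> 'I_k.+1 by apply: val_inj; rewrite /= modnDmr addn1 modnn.
  rewrite nb_i nb_j absD (upoint_shift k r tau_neq0 rk_j lam_j); split; last first.
    by move=> eq_D; case: drop_D => [|[_ //]]; lia.
  have split_q : qK k r tau ^+ r.-1 = qK k r tau ^+ D * qK k r tau ^+ (r.-1 - D).
    by rewrite -exprD subnKC.
  by rewrite -[LHS]mulr1 -(tK_qK_cycle k prim_tau) exprSr split_q; ring.
have lt_ak : (a < k)%N by have := ltn_ord a; have := a_neq_max; rewrite -val_eqE /=; lia.
have -> : a + Zp1 = inZp a.+1 by rewrite inZpS inZp_ord.
rewrite /nb_index /= modn_small // addnS.
have lt_succ : ((rk i + a).+1 < n)%N by lia.
have [lam_succ gap_eq0] := rank_index_succ i lt_succ.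
split=> //; rewrite -[tK k r]expr1; apply: upoint_shift => //.
by rewrite !rkpos_rank_index ?addn1 //; lia.
Qed.

Lemma upoint_in_wheel m : in_S n k r m lam -> in_wheel n k r m tau z.
Proof.
case=> nb [nbh nb_disj]; pose g l := nb_gap (nb l).1 (nb l).2.
pose a0 l := odflt ord0 [pick a | 0 < g l a]%N.
have g_a0 l : (l < m)%N -> (0 < g l (a0 l))%N.
  move=> lt_lm; rewrite /a0; case: pickP => [a //|none].
  have [_ sum_g] := neighborhood_cycle (nbh l lt_lm).
  suff : (\sum_a g l a == 0)%N by rewrite sum_g; lia.
  by rewrite sum_nat_eq0; apply/forallP => a; rewrite -leqn0 leqNgt none.
split=> [|]; first by move=> h; apply: upoint_neq0.
exists (fun l a => nb_index (nb l).1 (a0 l + Zp1 + inZp a)),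
       (fun l a => g l (a0 l + Zp1 + inZp a)).
split=> [l a l' a' lt_lm le_ak lt_l'm le_a'k eq_ix|l lt_lm]; last first.
  have [cyc sum_g] := neighborhood_cycle (nbh l lt_lm).
  exact: wheel_cycle_cut cyc sum_g (g_a0 l lt_lm).
have [eq_ll'|neq_ll'] := eqVneq l l'.
  subst l'; split=> //; move/(nb_index_inj (nbh l lt_lm))/addrI: eq_ix.
  exact: inZp_inj_le.
have := nb_disj l l' lt_lm lt_l'm (elimN eqP neq_ll').
move/disjointFr => /(_ _ (nb_index_nbset (a0 l + Zp1 + inZp a) (nbh l lt_lm))).
by rewrite eq_ix (nb_index_nbset _ (nbh l' lt_l'm)).
Qed.

End PointsOfS.

Section WheelWeights.
Variables (n k r m : nat) (tau : algC) (ix : nat -> nat -> 'I_n) (s : nat -> nat -> nat).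
Hypotheses (tau_neq0 : tau != 0) (r_gt1 : (1 < r)%N).
Hypothesis ix_inj : forall l a l' a',
  (l < m)%N -> (a <= k)%N -> (l' < m)%N -> (a' <= k)%N -> ix l a = ix l' a' -> l = l' /\ a = a'.
Hypothesis s_eq0_ltn : forall l a,
  (l < m)%N -> (a < k)%N -> s l a = 0%N -> (ix l a < ix l a.+1)%N.
Hypothesis sum_s_le : forall l, (l < m)%N -> (\sum_(a < k) s l a <= r - 2)%N.

(* Every index [j] off the wheels is treated as a wheel of length one. *)
Definition wheel_pick (j : 'I_n) := [pick p : 'I_m * 'I_k.+1 | ix p.1 p.2 == j].
Definition wheel_head j : 'I_n := if wheel_pick j is Some p then ix p.1 0 else j.
Definition wheel_pos j : nat := if wheel_pick j is Some p then (p.2 : nat) else 0%N.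
Definition wheel_off j : nat :=
  if wheel_pick j is Some p then (\sum_(b < p.2) s p.1 b)%N else 0%N.

Lemma wheel_ix l a : (l < m)%N -> (a <= k)%N ->
  [/\ wheel_head (ix l a) = ix l 0, wheel_pos (ix l a) = a
    & wheel_off (ix l a) = (\sum_(b < a) s l b)%N].
Proof.
move=> lt_lm le_ak; rewrite /wheel_head /wheel_pos /wheel_off /wheel_pick.
case: pickP => [p /eqP ix_p | none]; last first.
  by have := none (Ordinal lt_lm, Ordinal (le_ak : (a < k.+1)%N)); rewrite /= eqxx.
by have [-> ->] := ix_inj (ltn_ord p.1) (ltn_ord p.2 : (p.2 <= k)%N) lt_lm le_ak ix_p.
Qed.

Lemma wheelP j :
  (exists l a, [/\ (l < m)%N, (a <= k)%N & j = ix l a]) \/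
  [/\ wheel_head j = j, wheel_pos j = 0%N, wheel_off j = 0%N &
      forall l a, (l < m)%N -> (a <= k)%N -> ix l a != j].
Proof.
rewrite /wheel_head /wheel_pos /wheel_off /wheel_pick; case: pickP => [p /eqP ix_p | none].
  by left; exists p.1, p.2; split => //; rewrite -ltnS.
right; split => // l a lt_lm le_ak.
by have := none (Ordinal lt_lm, Ordinal (le_ak : (a < k.+1)%N)) => /= ->.
Qed.

Lemma wheel_off_le j : (wheel_off j <= r - 2)%N.
Proof.
case: (wheelP j) => [[l [a [lt_lm le_ak ->]]]|[_ _ -> _]] //.
have [_ _ ->] := wheel_ix lt_lm le_ak; apply: leq_trans (sum_s_le lt_lm).
rewrite (big_ord_widen _ _ le_ak).
by rewrite [X in (_ <= X)%N](bigID (fun b : 'I_k => (b < a)%N)) leq_addr.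
Qed.

Lemma wheel_head_idem j :
  [/\ wheel_head (wheel_head j) = wheel_head j, wheel_pos (wheel_head j) = 0%N
    & wheel_off (wheel_head j) = 0%N].
Proof.
case: (wheelP j) => [[l [a [lt_lm le_ak ->]]]|[head_j pos_j off_j _]];
  last by rewrite !head_j pos_j off_j.
have [-> _ _] := wheel_ix lt_lm le_ak.
by have [-> -> ->] := wheel_ix lt_lm (leq0n k); rewrite big_ord0.
Qed.

Lemma wheel_head_ix j l : (l < m)%N -> wheel_head j = ix l 0 ->
  exists2 b, (b <= k)%N & j = ix l b.
Proof.
move=> lt_lm head_j.
case: (wheelP j) => [[l' [b [lt_l'm le_bk eq_j]]]|[head_jj _ _ not_ix]].
  have [head_b _ _] := wheel_ix lt_l'm le_bk; rewrite -eq_j head_j in head_b.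
  have [-> _] := ix_inj lt_lm (leq0n k) lt_l'm (leq0n k) head_b.
  by exists b.
by have := not_ix l 0%N lt_lm (leq0n k); rewrite -head_jj head_j eqxx.
Qed.

Section Spacing.
Variable B : nat.

(* Heads are spaced further apart than any [x h < B] and any offset can bridge,
   so for every admissible [x] the weight [wheel_lam x] orders indices first by
   head and then along their wheel. *)
Definition wheel_spacing : nat := (B + r + 2)%N.

Definition wheel_lam (x : 'I_n -> nat) (j : 'I_n) : int :=
  (wheel_spacing * wheel_head j + x (wheel_head j))%N%:Z - (wheel_off j)%:Z.

Definition wheel_key (j : 'I_n) : int := - (n * wheel_off j)%N%:Z - (j : nat)%:Z.

Lemma lt_spaced_key (N M h h' x x' o o' i i' : nat) : (i < N)%N -> (i' < N)%N ->
  (h < h')%N -> (x + o' < M)%N ->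
  N%:Z * ((M * h + x)%N%:Z - o%:Z) - i%:Z < N%:Z * ((M * h' + x')%N%:Z - o'%:Z) - i'%:Z.
Proof.
move=> lt_i lt_i' lt_h lt_xo.
have le_M : (M * h + M <= M * h')%N by rewrite addnC -mulnS leq_mul2l lt_h orbT.
have : 1 <= ((M * h' + x')%N%:Z - o'%:Z) - ((M * h + x)%N%:Z - o%:Z) by lia.
set E := (_ - _) - _ => le1E; have : N%:Z <= N%:Z * E by nia.
by rewrite /E; lia.
Qed.

Lemma wheel_key_step l a : (l < m)%N -> (a < k)%N ->
  wheel_key (ix l a.+1) < wheel_key (ix l a).
Proof.
move=> lt_lm lt_ak; rewrite /wheel_key.
have [_ _ ->] := wheel_ix lt_lm lt_ak; have [_ _ ->] := wheel_ix lt_lm (ltnW lt_ak).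
rewrite big_ord_recr /=; have := ltn_ord (ix l a); have := ltn_ord (ix l a.+1).
have [s_eq0|s_gt0] := posnP (s l a); last by nia.
by have := s_eq0_ltn lt_lm lt_ak s_eq0; rewrite s_eq0; lia.
Qed.

Lemma wheel_key_decr l b b' : (l < m)%N -> (b < b')%N -> (b' <= k)%N ->
  wheel_key (ix l b') < wheel_key (ix l b).
Proof.
move=> lt_lm; elim: b' => [//|b' IHb'] lt_bb' le_b'k.
have step := wheel_key_step lt_lm le_b'k.
case: (ltngtP b b') => [lt_b|gt_b|->] //; last by lia.
exact: lt_trans step (IHb' lt_b (ltnW le_b'k)).
Qed.

Section Admissible.
Variable x : 'I_n -> nat.
Hypothesis x_lt : forall h, (x h < B)%N.

Lemma lt_rank_key_wheel_lam i j :
  (rank_key (wheel_lam x) i < rank_key (wheel_lam x) j) =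
  (wheel_head i < wheel_head j)%N ||
  ((wheel_head i == wheel_head j) && (wheel_key i < wheel_key j)).
Proof.
rewrite /rank_key /wheel_lam /wheel_key.
have := x_lt (wheel_head i); have := x_lt (wheel_head j).
have := wheel_off_le i; have := wheel_off_le j.
have := ltn_ord i; have := ltn_ord j; rewrite /wheel_spacing.
case: (ltngtP (wheel_head i) (wheel_head j)) => cmp_h *.
- by apply/idP; apply: lt_spaced_key => //; lia.
- have -> : (wheel_head i == wheel_head j) = false.
    by apply/eqP => eq_h; rewrite eq_h ltnn in cmp_h.
  apply/negbTE; rewrite -leNgt; apply/ltW.
  by apply: lt_spaced_key => //; lia.
- by rewrite (val_inj cmp_h) eqxx /=; apply/idP/idP; lia.
Qed.

Lemma rkpos_wheel_step l a : (l < m)%N -> (a < k)%N ->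
  rkpos n (wheel_lam x) (ix l a.+1) = (rkpos n (wheel_lam x) (ix l a)).+1.
Proof.
move=> lt_lm lt_ak; have [head_a _ _] := wheel_ix lt_lm (ltnW lt_ak).
have [head_a1 _ _] := wheel_ix lt_lm lt_ak.
rewrite !rkposE; apply: nabove_succ; first exact: rank_key_inj.
  by rewrite lt_rank_key_wheel_lam head_a head_a1 eqxx ltnn wheel_key_step.
move=> j; rewrite !lt_rank_key_wheel_lam head_a head_a1.
case: (ltngtP (ix l 0) (wheel_head j)) => cmp_h /=.
- by move=> _ /andP [/eqP eq_h _]; rewrite eq_h ltnn in cmp_h.
- by move=> /andP [/eqP eq_h _]; rewrite eq_h ltnn in cmp_h.
have head_j : wheel_head j = ix l 0 by apply: val_inj.
rewrite head_j eqxx /= => key_lt key_gt.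
have [b le_bk eq_j] := wheel_head_ix lt_lm head_j.
rewrite eq_j in key_lt key_gt.
case: (ltngtP b a.+1) => [lt_b|gt_b|eq_b]; last by rewrite eq_b ltxx in key_lt.
  case: (ltngtP b a) => [lt_ba|gt_ba|eq_ba]; last by rewrite eq_ba ltxx in key_gt.
  - by have := wheel_key_decr lt_lm lt_ba (ltnW lt_ak); rewrite ltNge ltW.
  - by move: lt_b gt_ba; lia.
by have := wheel_key_decr lt_lm gt_b le_bk; rewrite ltNge ltW.
Qed.

Lemma rkpos_wheel_ix l a : (l < m)%N -> (a <= k)%N ->
  rkpos n (wheel_lam x) (ix l a) = (rkpos n (wheel_lam x) (ix l 0) + a)%N.
Proof.
move=> lt_lm; elim: a => [|a IHa] le_ak; first by rewrite addn0.
by rewrite rkpos_wheel_step // IHa ?addnS // ltnW.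
Qed.

Lemma upoint_wheel_lam j :
  upoint n k r tau (wheel_lam x) j = upoint n k r tau (wheel_lam x) (wheel_head j) *
                                     tK k r ^+ wheel_pos j * qK k r tau ^+ wheel_off j.
Proof.
case: (wheelP j) => [[l [a [lt_lm le_ak ->]]]|[-> -> -> _]]; last by rewrite !mulr1.
have [head_a -> off_a] := wheel_ix lt_lm le_ak; rewrite head_a off_a.
apply: upoint_shift => //; first exact: rkpos_wheel_ix.
have [head_0 _ off_0] := wheel_ix lt_lm (leq0n k).
by rewrite /wheel_lam head_0 off_0 head_a off_a big_ord0; lia.
Qed.

Lemma wheel_lam_in_S : in_S n k r m (wheel_lam x).
Proof.
exists (fun l => (ix l 0, ix l k)); split=> [l lt_lm|l l' lt_lm lt_l'm neq_ll'] /=.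
  rewrite /neighborhood /rho2 (rkpos_wheel_ix lt_lm (leqnn k)).
  apply/andP; split; first by apply/eqP; lia.
  have [head_k _ off_k] := wheel_ix lt_lm (leqnn k).
  have [head_0 _ off_0] := wheel_ix lt_lm (leq0n k).
  rewrite /wheel_lam head_k head_0 off_k off_0 big_ord0.
  by apply/orP; left; have := sum_s_le lt_lm; have := r_gt1; lia.
have in_wheel_nbset l0 y : (l0 < m)%N -> y \in nbset n (wheel_lam x) (ix l0 0) (ix l0 k) ->
    exists2 a, (a <= k)%N & y = ix l0 a.
  move=> lt_l0m; rewrite inE (rkpos_wheel_ix lt_l0m (leqnn k)) => /andP [le_0y le_yk].
  exists (rkpos n (wheel_lam x) y - rkpos n (wheel_lam x) (ix l0 0))%N; first lia.
  by apply: (@rkpos_inj _ (wheel_lam x)); rewrite rkpos_wheel_ix //; lia.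
rewrite disjoint_sym; apply/pred0P => y /=; apply/negbTE/negP => /andP [y_l' y_l].
have [a le_ak eq_a] := in_wheel_nbset _ _ lt_lm y_l.
have [a' le_a'k eq_a'] := in_wheel_nbset _ _ lt_l'm y_l'.
by have [] := ix_inj lt_lm le_ak lt_l'm le_a'k (etrans (esym eq_a) eq_a').
Qed.

End Admissible.

Lemma rkpos_wheel_lam x x' : (forall h, x h < B)%N -> (forall h, x' h < B)%N ->
  rkpos n (wheel_lam x) =1 rkpos n (wheel_lam x').
Proof.
move=> x_lt x'_lt i; rewrite !rkposE; apply: eq_card => j.
by rewrite !inE (lt_rank_key_wheel_lam x_lt) (lt_rank_key_wheel_lam x'_lt).
Qed.

Definition wheel_grid (h : 'I_n) (u : nat) : Kf :=
  thalf k r ^ (- rho2 n (wheel_lam (fun=> 0%N)) h) *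
  qK k r tau ^ (- (wheel_spacing * h + u)%N%:Z).

Lemma wheel_grid_neq0 h u : wheel_grid h u != 0.
Proof. by rewrite mulf_neq0 // expfz_neq0 ?thalf_neq0 ?qK_neq0. Qed.

Lemma wheel_grid_inj h : injective (wheel_grid h).
Proof.
move=> u u' /(mulfI (expfz_neq0 _ (thalf_neq0 k r))) /(qK_expz_inj tau_neq0).
by move/oppr_inj/eqP; rewrite eqz_nat eqn_add2l => /eqP.
Qed.

Lemma upoint_wheel_head x : (0 < B)%N -> (forall h, x h < B)%N -> forall j,
  upoint n k r tau (wheel_lam x) (wheel_head j) = wheel_grid (wheel_head j) (x (wheel_head j)).
Proof.
move=> B_gt0 x_lt j.
rewrite /upoint /wheel_grid /rho2 (rkpos_wheel_lam x_lt (fun=> B_gt0)).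
have [head_head _ off_head] := wheel_head_idem j.
by rewrite /wheel_lam head_head off_head subr0.
Qed.

End Spacing.

Definition wheel_point (y : 'I_n -> Kf) (j : 'I_n) : Kf :=
  y (wheel_head j) * tK k r ^+ wheel_pos j * qK k r tau ^+ wheel_off j.

(* On the grid, [wheel_point] is the point of the weight [wheel_lam x] in [S]. *)
Lemma leval_wheel_point_eq0 (f : LPoly n) :
  (forall lam, in_S n k r m lam -> u_lam n k r tau lam f = 0) ->
  forall y : {ffun 'I_n -> Kf}, (forall h, y h != 0) -> leval n f (wheel_point y) = 0.
Proof.
move=> f_S; pose D := (\max_(e <- msupp f) \sum_i absz (e i))%N.
have deg_f e : e \in msupp f -> (\sum_i absz (e i) <= D)%N by move/leq_bigmax_seq; apply.
apply: (laurent_grid_eq0 (leqnn (2 * D).+1) (@wheel_grid_neq0 _) (@wheel_grid_inj _)).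
  move=> y h; have [p [p_le pE]] := leval_laurent (fun j => wheel_head j == h)
    (fun j => tK k r ^+ wheel_pos j * qK k r tau ^+ wheel_off j) (wheel_point y) deg_f.
  exists p; split=> // v v_neq0; rewrite -pE //; apply: eq_leval => j.
  by rewrite /wheel_point ffunE; case: eqP; rewrite -?mulrA.
move=> x x_lt; have := f_S _ (wheel_lam_in_S x_lt); rewrite /u_lam => <-.
have B_gt0 : (0 < (2 * D).+1)%N by [].
apply: eq_leval => j; rewrite (upoint_wheel_lam x_lt j) /wheel_point ffunE.
by rewrite (upoint_wheel_head B_gt0 x_lt).
Qed.

Lemma wheel_pointE (z : 'I_n -> Kf) :
  (forall l a, (l < m)%N -> (a < k)%N ->
     z (ix l a.+1) = z (ix l a) * tK k r * qK k r tau ^+ s l a) ->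
  z =1 wheel_point z.
Proof.
move=> z_step j; rewrite /wheel_point.
case: (wheelP j) => [[l [a [lt_lm le_ak ->]]]|[-> -> -> _]]; last by rewrite !mulr1.
have [-> -> ->] := wheel_ix lt_lm le_ak; elim: a le_ak => [|a IHa] lt_ak.
  by rewrite big_ord0 !mulr1.
rewrite z_step // IHa 1?ltnW // big_ord_recr /= exprSr exprD; ring.
Qed.

End WheelWeights.

Theorem proposition6p1 (n k r : nat) (tau : algC) (m : nat) :
  (2 <= n)%N -> (1 <= k <= n.-1)%N -> (2 <= r)%N ->
  (r.-1).-primitive_root tau -> (1 <= m)%N ->
  forall f : LPoly n,
    in_I n k r m tau f <->
    (forall lam : 'I_n -> int, in_S n k r m lam -> u_lam n k r tau lam f = 0).
Proof.
move=> _ _ r_gt1 prim_tau _ f.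
have tau_neq0 : tau != 0 by rewrite (prim_root_eq0 prim_tau) -lt0n; lia.
split=> [f_I lam lam_S | f_S z [z_neq0 [ix [s [ix_inj wheels]]]]].
  exact/f_I/(upoint_in_wheel r_gt1 prim_tau).
have z_step l a : (l < m)%N -> (a < k)%N ->
    z (ix l a.+1) = z (ix l a) * tK k r * qK k r tau ^+ s l a.
  by move=> lt_lm lt_ak; have [/(_ a lt_ak) []] := wheels l lt_lm.
have s_eq0_ltn l a : (l < m)%N -> (a < k)%N -> s l a = 0%N -> (ix l a < ix l a.+1)%N.
  by move=> lt_lm lt_ak; have [/(_ a lt_ak) []] := wheels l lt_lm.
have sum_s_le l : (l < m)%N -> (\sum_(a < k) s l a <= r - 2)%N by case/wheels.
have -> : leval n f z = leval n f (wheel_point k r m tau ix s [ffun j => z j]).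
  by apply: eq_leval => j; rewrite (wheel_pointE ix_inj z_step) /wheel_point ffunE.
apply: (leval_wheel_point_eq0 tau_neq0 r_gt1 ix_inj s_eq0_ltn sum_s_le f_S) => h.
by rewrite ffunE.
Qed.
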